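(* Let $G$ be a finite nonabelian group having a nonnormal subgroup $S$ of index $[G:S]=3$. Then $\beta(G)\ge \frac{4}{3}|G|$.
   Context: For a nonempty subset $X$ of a group $G$, $Q(X):=\{xy^{-1}: x,y\in X\}$. Nonempty subsets $S_1,S_2,S_3$ of $G$ satisfy the Triple Product Property (TPP) if for all $s_i\in Q(S_i)$: $s_1s_2s_3=1$ iff $s_1=s_2=s_3=1$. A group $G$ realizes $\langle n,p,m\rangle$ if there are subsets $S_1,S_2,S_3\subseteq G$ with $|S_1|=n$, $|S_2|=p$, $|S_3|=m$ satisfying the TPP. For a nontrivial finite group $G$, the TPP capacity is $\beta(G):=\max\{npm : G \text{ realizes } \langle n,p,m\rangle\}$. *)

From mathcomp Require Import all_boot all_fingroup.
Set Implicit Arguments. Unset Strict Implicit. Unset Printing Implicit Defensive.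
Local Open Scope group_scope.

Definition Qset (gT : finGroupType) (X : {set gT}) : {set gT} :=
  [set x * y^-1 | x in X, y in X].

Definition TPP (gT : finGroupType) (S1 S2 S3 : {set gT}) : bool :=
  [&& S1 != set0, S2 != set0, S3 != set0 &
   [forall s1 in Qset S1, forall s2 in Qset S2, forall s3 in Qset S3,
      (s1 * s2 * s3 == 1) == [&& s1 == 1, s2 == 1 & s3 == 1]]].

Definition realizes (gT : finGroupType) (G : {set gT}) (n p m : nat) : Prop :=
  exists S1 S2 S3 : {set gT},
    [/\ S1 \subset G, S2 \subset G & S3 \subset G] /\
    [/\ #|S1| = n, #|S2| = p, #|S3| = m & TPP S1 S2 S3].

Definition beta (gT : finGroupType) (G : {set gT}) : nat :=
  \max_(S : {set gT} * {set gT} * {set gT} |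
          [&& S.1.1 \subset G, S.1.2 \subset G, S.2 \subset G &
              TPP S.1.1 S.1.2 S.2])
     (#|S.1.1| * #|S.1.2| * #|S.2|)%N.

From mathcomp Require Import all_boot all_fingroup.
From mathcomp Require Import gseries maximal.
Set Implicit Arguments. Unset Strict Implicit.
Local Open Scope group_scope.

(* Since [G : S] = 3 is prime and S is not normal, N_G(S) = S, so every a outside S
   conjugates some x in S outside S.  Choosing such an a with a^2 in S, counting the
   three right cosets shows that b = a x a^-1 also lies outside S with b^2 in S, and
   ab lies outside S.  As a^2, b^2 \in S, each product a^(+-1) b^(+-1) lies in S only
   if ab does, so S, {1, a}, {1, b} have the triple product property and
   beta(G) >= 4 |S| = 4/3 |G|. *)

Lemma TPP_leq_beta (gT : finGroupType) (G S1 S2 S3 : {set gT}) :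
  S1 \subset G -> S2 \subset G -> S3 \subset G -> TPP S1 S2 S3 ->
  (#|S1| * #|S2| * #|S3| <= beta G)%N.
Proof.
move=> sS1G sS2G sS3G tpp.
pose P (T : {set gT} * {set gT} * {set gT}) :=
  [&& T.1.1 \subset G, T.1.2 \subset G, T.2 \subset G & TPP T.1.1 T.1.2 T.2].
by apply: (@leq_bigmax_cond _ P _ (S1, S2, S3)); rewrite /P /= sS1G sS2G sS3G.
Qed.

Section TripleProduct.

Variable gT : finGroupType.

Lemma Qset_group_sub (H : {group gT}) : Qset H \subset H.
Proof. by apply/subsetP => _ /imset2P [u v uH vH ->]; rewrite groupM ?groupV. Qed.

Lemma mem_Qset_pair (a s : gT) :
  s \in Qset [set 1; a] -> [\/ s = 1, s = a | s = a^-1].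
Proof.
case/imset2P => u v /set2P [] -> /set2P [] -> ->;
  rewrite ?invg1 ?mulg1 ?mul1g ?mulgV;
  by [constructor 1 | constructor 2 | constructor 3].
Qed.

(* As Q(H) = H, some s1 in Q(H) solves s1 s2 s3 = 1 exactly when s2 s3 \in H. *)
Lemma TPP_group_l (H : {group gT}) (A B : {set gT}) :
  A != set0 -> B != set0 ->
  (forall u v, u \in Qset A -> v \in Qset B -> u * v \in H -> u = 1 /\ v = 1) ->
  TPP H A B.
Proof.
move=> A0 B0 QAB; rewrite /TPP A0 B0 /=; apply/andP; split.
  by apply/set0Pn; exists 1.
apply/forall_inP => s1 Qs1; apply/forall_inP => s2 Qs2; apply/forall_inP => s3 Qs3.
apply/eqP; apply/idP/idP => [/eqP s123 | /and3P [/eqP -> /eqP -> /eqP ->]]; last first.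
  by rewrite !mulg1.
have /(QAB _ _ Qs2 Qs3) [s2_1 s3_1] : s2 * s3 \in H.
  have -> : s2 * s3 = s1^-1 by rewrite -(mulKg s1 (s2 * s3)) (mulgA s1) s123 mulg1.
  by rewrite groupV (subsetP (Qset_group_sub H)).
by move: s123; rewrite s2_1 s3_1 !mulg1 => ->; rewrite !eqxx.
Qed.

Lemma TPP_group_pair (H : {group gT}) (a b : gT) :
  a \notin H -> b \notin H -> a * a \in H -> b * b \in H -> a * b \notin H ->
  TPP H [set 1; a] [set 1; b].
Proof.
move=> aH bH aaH bbH abH.
have abVH : a * b^-1 \notin H.
  by apply: contra abH => /groupM/(_ bbH); rewrite mulgA mulgKV.
have aVbH : a^-1 * b \notin H.
  by apply: contra abH => /(groupM aaH); rewrite -mulgA mulKVg.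
have aVbVH : a^-1 * b^-1 \notin H.
  by apply: contra abVH => /(groupM aaH); rewrite -mulgA mulKVg.
apply: TPP_group_l; try by apply/set0Pn; exists 1; rewrite !inE eqxx.
move=> u v /mem_Qset_pair [] -> /mem_Qset_pair [] ->;
  rewrite ?mulg1 ?mul1g ?groupV // => uvH; by rewrite uvH in aH bH abH abVH aVbH aVbVH.
Qed.

End TripleProduct.

Section IndexThree.

Variables (gT : finGroupType) (G S : {group gT}).
Hypotheses (sSG : S \subset G) (iSG : #|G : S| = 3) (nnSG : ~~ (S <| G)).

Lemma index3_rcoset_cover (g h z : gT) :
  g \in G -> h \in G -> z \in G -> g \notin S -> h \notin S -> g * h^-1 \notin S ->
  [|| z \in S, z * g^-1 \in S | z * h^-1 \in S].
Proof.
move=> gG hG zG gS hS ghS; apply/negPn/negP; rewrite !negb_or => /and3P [zS zgS zhS].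
have neq_rcoset u v : u * v^-1 \notin S -> S :* u != S :* v.
  by move=> uvS; apply: contra uvS => /eqP/rcoset_eqP; rewrite mem_rcoset.
have uniq_cosets : uniq [:: S :* 1; S :* g; S :* h; S :* z].
  rewrite /= !inE !negb_or -!andbA.
  by rewrite !neq_rcoset ?mul1g ?groupV // -groupV invMg invgK.
have : (4 <= #|rcosets S G|)%N.
  rewrite -[4%N](card_uniqP uniq_cosets); apply: subset_leq_card; apply/subsetP => C.
  rewrite !inE => /or4P [] /eqP ->; apply/rcosetsP;
    by [exists 1 | exists g | exists h | exists z]; rewrite ?group1.
by rewrite -/#|G : S| iSG.
Qed.

Lemma index3_normI : 'N_G(S) = S.
Proof.
have /maximal_eqP [_ /(_ 'N_G(S)%G)] : maximal_eq S G.
  by rewrite /maximal_eq p_index_maximal ?iSG ?orbT.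
case=> [||-> //|NG]; rewrite ?subsetIl ?subsetI ?sSG ?normG //.
by case/negP: nnSG; rewrite /normal sSG -NG subsetIr.
Qed.

Lemma index3_conj_notin (a : gT) :
  a \in G -> a \notin S -> exists2 x, x \in S & a * x * a^-1 \notin S.
Proof.
move=> aG aS; have : a^-1 \notin 'N(S).
  by apply: contra aS => aN; rewrite -groupV -index3_normI inE groupV aG aN.
rewrite inE => /subsetPn [_ /imsetP [x xS ->] xaS]; exists x => //.
by rewrite conjgE invgK mulgA in xaS.
Qed.

(* Otherwise g^3 \in S for every g outside S, and then g x g \in S for the x of
   [index3_conj_notin] forces (g x)^2 \in S. *)
Lemma index3_sqr_in : exists a, [/\ a \in G, a \notin S & a * a \in S].
Proof.
suff /exists_inP [a aG /andP [aS aaS]] : [exists a in G, (a \notin S) && (a * a \in S)].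
  by exists a.
apply: contraT => /exists_inPn no_sqr.
have sqr_notin u : u \in G -> u \notin S -> u * u \notin S.
  by move=> uG uS; have := no_sqr u uG; rewrite uS.
have [g gG gS] : exists2 g, g \in G & g \notin S.
  by apply/subsetPn; rewrite -indexg_eq1 iSG.
have [x xS gxS] := index3_conj_notin gG gS.
have ggG : g * g \in G by rewrite groupM.
have ggS := sqr_notin g gG gS.
have g_gg : g * (g * g)^-1 \notin S by rewrite invMg mulgA mulgV mul1g groupV.
have gggS : g * g * g \in S.
  case/or3P: (index3_rcoset_cover gG ggG (groupM ggG gG) gS ggS g_gg) => //.
    by rewrite mulgK => ggS'; rewrite ggS' in ggS.
  by rewrite invMg !mulgA !mulgK => gS'; rewrite gS' in gS.
have gxG : g * x \in G by rewrite groupM // (subsetP sSG).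
have gx_notin : g * x \notin S by rewrite groupMr.
case/or3P: (index3_rcoset_cover gG ggG gxG gS ggS g_gg).
- by rewrite (negPf gx_notin).
- by rewrite (negPf gxS).
move=> gx_gg; have gxgS : g * x * g \in S.
  by have := groupM gx_gg gggS; rewrite invMg !mulgA !mulgKV.
by have := sqr_notin _ gxG gx_notin; rewrite mulgA groupMr // gxgS.
Qed.

Lemma index3_TPP_pair : exists a b,
  [/\ a \in G, b \in G, a \notin S, b \notin S & TPP S [set 1; a] [set 1; b]].
Proof.
have [a [aG aS aaS]] := index3_sqr_in.
have [x xS axS] := index3_conj_notin aG aS.
have xG := subsetP sSG x xS.
have axG : a * x \in G by rewrite groupM.
have ax_notin : a * x \notin S by rewrite groupMr.
have a_ax : a * (a * x)^-1 \notin S by rewrite -groupV !invMg !invgK.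
exists a, (a * x * a^-1); split=> //; first by rewrite !groupM ?groupV.
apply: TPP_group_pair => //.
- case/or3P: (index3_rcoset_cover aG axG (groupM axG xG) aS ax_notin a_ax).
  + by rewrite !(groupMr _ xS) (negPf aS).
  + by rewrite !mulgA mulgKV.
  + by rewrite invMg !mulgA mulgK => axS'; rewrite axS' in axS.
- by rewrite !mulgA groupMl ?groupV // groupM.
Qed.

End IndexThree.

Theorem mainTheorem4 (gT : finGroupType) (G S : {group gT}) :
  ~~ abelian G -> S \subset G -> ~~ (S <| G)%g -> #|G : S|%g = 3 ->
  (4 * #|G| <= 3 * beta G)%N.
Proof.
move=> _ sSG nnSG iSG.
have [a [b [aG bG aS bS tpp]]] := index3_TPP_pair sSG iSG nnSG.
have sub_pair c : c \in G -> [set 1; c] \subset G.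
  by move=> cG; apply/subsetP => y /set2P [] ->.
have card_pair c : c \notin S -> #|[set 1; c]| = 2.
  by move=> cS; rewrite cards2; case: eqP cS => // <-; rewrite group1.
have := TPP_leq_beta sSG (sub_pair a aG) (sub_pair b bG) tpp.
rewrite card_pair // card_pair // -mulnA -(Lagrange sSG) iSG => le_beta.
by rewrite (mulnC #|S|) mulnCA leq_mul2l mulnC.
Qed.
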